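(* Let $G$ be a finite GVZ-group with $|\mathrm{cd}(G)|=2$, and let $N$ be a normal subgroup of $G$ with $G'\not\subseteq N$. Let $\chi\in\mathrm{Irr}(G/N)$, regarded as an irreducible character of $G$ with $N\subseteq\ker\chi$. Then $\chi$ is non-linear if and only if $N[Z(\chi),G]$ is a proper subgroup of $NG'$.
   Context: All groups are finite. $\mathrm{Irr}(G)$ is the set of complex irreducible characters of $G$ and $\mathrm{cd}(G)=\{\chi(1):\chi\in\mathrm{Irr}(G)\}$. For a character $\chi$, $Z(\chi)=\{g\in G: |\chi(g)|=\chi(1)\}$. A nonabelian group $G$ is a GVZ-group if for every $\chi\in\mathrm{Irr}(G)$ we have $\chi(g)=0$ for all $g\in G\setminus Z(\chi)$. *)

From mathcomp Require Import all_boot all_order all_algebra all_fingroup all_solvable all_field all_character.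
Set Implicit Arguments. Unset Strict Implicit. Unset Printing Implicit Defensive.
Import GRing.Theory Num.Theory.
Local Open Scope ring_scope.

Definition cd (gT : finGroupType) (G : {group gT}) : seq algC :=
  undup [seq 'chi[G]_i 1%g | i : Iirr G].

Definition GVZ (gT : finGroupType) (G : {group gT}) : Prop :=
  ~~ abelian G /\
  forall (i : Iirr G) (g : gT), g \in G -> g \notin ('Z('chi[G]_i))%CF ->
    'chi[G]_i g = 0.

From mathcomp Require Import all_boot all_order all_algebra all_fingroup all_solvable all_field all_character.
Import GRing.Theory Num.Theory.
Local Open Scope ring_scope.

(* Both N and [Z(chi), G] lie in ker chi, the latter because Z(chi)/ker chi is
   central in G/ker chi; hence N[Z(chi), G] contains G' only if ker chi does,
   i.e. only if chi is linear.  Conversely a linear chi has Z(chi) = G, so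
   [Z(chi), G] = G'. *)

Section CenterCommutator.

Variables (gT : finGroupType) (G : {group gT}).

Lemma cfcenter_commg_sub_cfker (phi : 'CF(G)) :
  ([~: 'Z(phi)%CF, G] \subset cfker phi)%g.
Proof.
have nKG := normal_norm (cfker_normal phi).
rewrite -quotient_cents2 //; last exact: subset_trans (cfcenter_sub phi) nKG.
exact: subset_trans (cfcenter_subset_center phi) (subsetIr _ _).
Qed.

Lemma cfcenter_lin_char (xi : 'CF(G)) : xi \is a linear_char -> 'Z(xi)%CF = G.
Proof.
move=> lin_xi; apply/eqP; rewrite eqEsubset cfcenter_sub.
apply/subsetP=> x Gx.
by rewrite char_cfcenterE ?lin_charW // normC_lin_char // lin_char1.
Qed.

Lemma irr1_eq1_der1 (i : Iirr G) :
  ('chi[G]_i 1%g == 1) = (G^`(1) \subset cfker 'chi[G]_i)%g.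
Proof. by rewrite -lin_irr_der1 qualifE /= irr_char. Qed.

Lemma irr1_neq1_proper_commg (N : {group gT}) (i : Iirr G) :
  (N \subset cfker 'chi[G]_i)%g ->
  ('chi[G]_i 1%g != 1) =
  ((N * [~: 'Z('chi[G]_i)%CF, G]) \proper (N * G^`(1)))%g.
Proof.
move=> sNK; have [lin_chi | nlin_chi] /= := boolP ('chi_i 1%g == 1).
  have Lchi : 'chi_i \is a linear_char by rewrite qualifE /= irr_char.
  by rewrite cfcenter_lin_char // properxx.
rewrite properE mulgS ?commgSS ?cfcenter_sub //=; apply/esym/negP => sNG'.
have sNZK : (N * [~: 'Z('chi_i)%CF, G] \subset cfker 'chi_i)%g.
  by rewrite mul_subG ?cfcenter_commg_sub_cfker.
move: nlin_chi; rewrite irr1_eq1_der1 => /negP; apply.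
exact: subset_trans (mulG_subr N _) (subset_trans sNG' sNZK).
Qed.

End CenterCommutator.

Theorem mainTheorem2 (gT : finGroupType) (G N : {group gT}) (i : Iirr G) :
  GVZ G -> size (cd G) = 2%N ->
  (N <| G)%g -> ~~ (G^`(1) \subset N)%g ->
  (N \subset cfker 'chi[G]_i)%g ->
  ('chi[G]_i 1%g != 1) =
  ((N * [~: ('Z('chi[G]_i))%CF, G]) \proper (N * G^`(1)))%g.
Proof. by move=> _ _ _ _; exact: irr1_neq1_proper_commg. Qed.
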